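(* Let $a,d$ be real numbers and let $A_{n,k}(a,d)$ be the general Eulerian numbers defined below. Then for all integers $n\ge 1$ and $m\ge 1$, $$\sum_{i=1}^m (a+(i-1)d)^n=\sum_{j=-1}^{n-1}A_{n,j}(a,d)\binom{m+j+1}{n+1}.$$
   Context: For real numbers $a,d$, the general Eulerian numbers $A_{n,k}(a,d)$ (integers $n\ge 0$, $k$) are defined by $A_{0,-1}(a,d)=1$, $A_{n,k}(a,d)=0$ whenever $k\ge n$ or $k\le -2$ (in particular $A_{0,k}=0$ for $k\neq -1$), and for $n\ge 1$, $-1\le k\le n-1$: $$A_{n,k}(a,d)=(-a+(k+2)d)A_{n-1,k}(a,d)+(a+(n-k-1)d)A_{n-1,k-1}(a,d).$$ For a nonnegative integer $x$ and $n\ge 0$, $\binom{x}{n}=x(x-1)\cdots(x-n+1)/n!$ (so it is $0$ when $x<n$). *)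

From mathcomp Require Import all_boot all_order all_algebra.
From mathcomp Require Import reals.
Set Implicit Arguments. Unset Strict Implicit. Unset Printing Implicit Defensive.
Import Order.TTheory GRing.Theory Num.Theory.
Local Open Scope ring_scope.

Fixpoint genEuler (R : nzRingType) (a d : R) (n : nat) (k : int) : R :=
  match n with
  | 0%N => if k == (-1)%R then 1 else 0
  | n'.+1 =>
      if ((-1)%R <= k) && (k <= (n'%:Z)%R) then
        (- a + (k + 2)%:~R * d) * genEuler a d n' k
        + (a + ((n'.+1)%:Z - k - 1)%:~R * d) * genEuler a d n' (k - 1)
      else 0
  end.

(* For fixed [n], the numbers A_{n,j} express the power (a + y d)^n in the
   binomial basis C(y + j, n) (a Worpitzky identity): the recurrence of
   A_{n,j} is exactly the relation obtained by multiplying such a basis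
   element by a + y d.  Summing over y = 0 .. m-1 then turns each C(y + j, n)
   into C(m + j, n + 1) by the hockey-stick identity. *)
From mathcomp Require Import all_boot all_order all_algebra.
From mathcomp Require Import reals.
From mathcomp Require Import zify ring.
Import Order.TTheory GRing.Theory Num.Theory.
Local Open Scope ring_scope.

Section GeneralEulerian.
Variables (R : comNzRingType) (a d : R).

Lemma genEuler_m2 n : genEuler a d n (-2) = 0.
Proof. by case: n. Qed.

Lemma genEuler_small n j : (n < j)%N -> genEuler a d n (j%:Z - 1) = 0.
Proof.
case: n => [|n] /= ltnj.
  by have -> : (j%:Z - 1 == -1) = false by apply/negbTE/eqP; lia.
by have -> : ((-1 <= j%:Z - 1) && (j%:Z - 1 <= n%:Z)) = false
  by apply/negbTE/negP => /andP[_]; lia.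
Qed.

Lemma genEulerS n j : (j <= n.+1)%N ->
  genEuler a d n.+1 (j%:Z - 1) =
  (- a + j.+1%:R * d) * genEuler a d n (j%:Z - 1)
  + (a + (n.+1%:Z - j%:Z)%:~R * d) * genEuler a d n (j%:Z - 1 - 1).
Proof.
move=> lejn /=.
have -> : (-1 <= j%:Z - 1) && (j%:Z - 1 <= n%:Z) by apply/andP; split; lia.
have -> : j%:Z - 1 + 2 = j.+1%:Z by lia.
by have -> : n.+1%:Z - (j%:Z - 1) - 1 = n.+1%:Z - j%:Z by lia.
Qed.

Lemma natr_mul_bin_left (N n : nat) :
  n.+1%:R * ('C(N, n.+1))%:R = (N%:R - n%:R) * ('C(N, n))%:R :> R.
Proof.
rewrite -natrM mul_bin_left.
case: (leqP n N) => [lenN | ltNn]; first by rewrite natrM natrB.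
by rewrite bin_small // muln0 mulr0.
Qed.

(* Pascal's rule on C(y+j+1, n+1) followed by absorption
   (n+1) C(N, n+1) = (N - n) C(N, n). *)
Lemma affine_mul_bin (y j n : nat) :
  (a + y%:R * d) * ('C(y + j, n))%:R =
  (- a + j.+1%:R * d) * ('C(y + j, n.+1))%:R
  + (a + (n%:Z - j%:Z)%:~R * d) * ('C((y + j).+1, n.+1))%:R.
Proof.
have absorb := natr_mul_bin_left (y + j) n.
rewrite binS natrD intrB.
move: absorb; set C0 := ('C(y + j, n))%:R; set C1 := ('C(y + j, n.+1))%:R.
move=> absorb; apply/eqP; rewrite -subr_eq0; apply/eqP.
transitivity (d * (((y + j)%:R - n%:R) * C0 - n.+1%:R * C1)).
  by rewrite -!natr1 !natrD; ring.
by rewrite absorb subrr mulr0.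
Qed.

Lemma genEuler_worpitzky (y n : nat) :
  (a + y%:R * d) ^+ n =
  \sum_(0 <= j < n.+1) genEuler a d n (j%:Z - 1) * ('C(y + j, n))%:R.
Proof.
elim: n => [|n IH]; first by rewrite big_nat1 /= expr0 addn0 bin0 mulr1.
rewrite exprS IH big_distrr.
under [RHS]eq_big_nat => j /andP[_ lejn].
  rewrite genEulerS // mulrDl.
over.
rewrite big_split /= (big_nat_recr n.+1) //= genEuler_small // mulr0 mul0r addr0.
rewrite (big_nat_recl n.+1) //= genEuler_m2 mulr0 mul0r add0r -big_split /=.
apply: eq_bigr => j _.
have -> : j.+1%:Z - 1 - 1 = j%:Z - 1 by lia.
have -> : n.+1%:Z - j.+1%:Z = n%:Z - j%:Z by lia.
by rewrite mulrCA affine_mul_bin mulrDr addnS; congr (_ + _); ring.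
Qed.

Lemma sum_powers_genEuler (n m : nat) :
  \sum_(1 <= i < m.+1) (a + (i.-1)%:R * d) ^+ n
  = \sum_(0 <= j < n.+1) genEuler a d n (j%:Z - 1) * ('C(m + j, n.+1))%:R.
Proof.
elim: m => [|m IH].
  rewrite big_geq // big1_seq // => j; rewrite mem_iota => /andP[_ ltjn].
  by rewrite add0n bin_small ?mulr0.
rewrite big_nat_recr //= IH genEuler_worpitzky -big_split /=.
by apply: eq_bigr => j _; rewrite addSn binS natrD mulrDr.
Qed.

End GeneralEulerian.

Theorem lemma2p4 (R : realType) (a d : R) (n m : nat) :
  (1 <= n)%N -> (1 <= m)%N ->
  \sum_(1 <= i < m.+1) (a + (i.-1)%:R * d) ^+ n
  = \sum_(0 <= j < n.+1)
      genEuler a d n (j%:Z - 1) * ('C(m + j, n.+1))%:R.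
Proof. by move=> _ _; exact: sum_powers_genEuler. Qed.
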